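(* For a simple closed curve $C=\partial D$ in $\mathbb{R}^2$, equip the set of $\mathbb{R}^2$-valued vector fields on $C$ with the inner product $\langle X,X'\rangle_C=\frac{1}{\sigma(C)}\int_C\langle X,X'\rangle\,ds$. Let $\Psi(D)=\ln\big(\sigma(\partial D)/\lambda(D)^2\big)$. For any smooth family of simple closed curves $C_t$ with $\partial_t C(t,u)=X_t(u)$ for a smooth vector field $X$, one has $\frac{d}{dt}\Psi(D_t)=\big\langle X_t,\big(\rho-\tfrac{2\sigma(C_t)}{\lambda(D_t)}\big)\nu\big\rangle_{C_t}$; consequently the gradient of $\Psi$ at $C$ for this inner product is the vector field $\big(\rho-2\sigma(C)/\lambda(D)\big)\nu$, and the renormalized curvature flow equation $\partial_t C=(-\rho+2\sigma(C)/\lambda(D))\nu$ is the gradient descent flow of $\Psi$.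
   Context: For a simple closed $C^2$ curve $C$ bounding the domain $D$: $\lambda(D)$ is the area, $\sigma(C)$ the length, $ds$ arc length, $\nu$ the outward unit normal, $\rho$ the curvature. *)

From Stdlib Require Import Reals List.
From Coquelicot Require Import Coquelicot.
Open Scope R_scope.

(* A family of plane curves C(t,u) = (x t u, y t u); t is the time
   parameter, u the curve parameter (period 1). *)

Definition pt (f : R -> R -> R) : R -> R -> R :=
  fun t u => Derive (fun s => f s u) t.
Definition pu (f : R -> R -> R) : R -> R -> R :=
  fun t u => Derive (fun v => f t v) u.

Fixpoint iter_pd (l : list bool) (f : R -> R -> R) : R -> R -> R :=
  match l with
  | nil => f
  | b :: l' => if b then pt (iter_pd l' f) else pu (iter_pd l' f)
  end.

Definition smooth2 (f : R -> R -> R) : Prop :=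
  forall (l : list bool) (t u : R),
    ex_derive (fun s => iter_pd l f s u) t /\
    ex_derive (fun v => iter_pd l f t v) u /\
    continuous (fun p : R * R => iter_pd l f (fst p) (snd p)) (t, u).

Definition speed (x y : R -> R -> R) (t u : R) : R :=
  sqrt (pu x t u ^ 2 + pu y t u ^ 2).

Definition len_C (x y : R -> R -> R) (t : R) : R :=
  RInt (fun u => speed x y t u) 0 1.

(* signed area (Green's formula) *)
Definition signed_area (x y : R -> R -> R) (t : R) : R :=
  / 2 * RInt (fun u => x t u * pu y t u - y t u * pu x t u) 0 1.

Definition orient (x y : R -> R -> R) (t : R) : R :=
  if Rlt_dec 0 (signed_area x y t) then 1 else -1.

Definition lambda (x y : R -> R -> R) (t : R) : R :=
  Rabs (signed_area x y t).

(* outward unit normal nu = (nu1, nu2) *)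
Definition nu1 (x y : R -> R -> R) (t u : R) : R :=
  orient x y t * pu y t u / speed x y t u.
Definition nu2 (x y : R -> R -> R) (t u : R) : R :=
  - (orient x y t * pu x t u / speed x y t u).

(* curvature rho (positive for convex curves) *)
Definition curv (x y : R -> R -> R) (t u : R) : R :=
  orient x y t *
  (pu x t u * pu (pu y) t u - pu y t u * pu (pu x) t u) / speed x y t u ^ 3.

Definition inner_C (x y : R -> R -> R) (t : R)
  (X1 X2 V1 V2 : R -> R) : R :=
  / len_C x y t * RInt (fun u => (X1 u * V1 u + X2 u * V2 u) * speed x y t u) 0 1.

Definition Psi (x y : R -> R -> R) (t : R) : R :=
  ln (len_C x y t / lambda x y t ^ 2).

Definition smooth_simple_closed_family (x y : R -> R -> R) : Prop :=
  smooth2 x /\ smooth2 y /\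
  (forall t u, x t (u + 1) = x t u /\ y t (u + 1) = y t u) /\
  (forall t u1 u2, 0 <= u1 < 1 -> 0 <= u2 < 1 ->
     x t u1 = x t u2 -> y t u1 = y t u2 -> u1 = u2) /\
  (forall t u, pu x t u <> 0 \/ pu y t u <> 0).

From Stdlib Require Import Reals Lra Nsatz.
From Coquelicot Require Import Coquelicot.
Open Scope R_scope.

(* Write C_u = (x', y') for the tangent, s = |C_u| for the speed, X = (x_t, y_t)
   for the velocity, W = x_t y' - y_t x' for the (unnormalised) normal velocity
   and k = (x' y'' - y' x'') / s^3 for the signed curvature.  Differentiating
   under the integral sign, d/dt s = <C_u, X_u> / s, which differs from k W by
   the u-derivative of the 1-periodic function <C_u, X> / s; hence
   sigma' = int_0^1 k W du.  Likewise the derivative of Green's integrand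
   x y' - y x' is 2 W plus the u-derivative of x y_t - y x_t, so the signed
   area A satisfies A' = int_0^1 W du.  Since nu = sgn(A) (y', -x') / s and
   rho = sgn(A) k, the integrand of <X, (rho - c) nu>_C is k W - c sgn(A) W,
   and Psi = ln (sigma / A^2) has Psi' = sigma'/sigma - 2 A'/A, which is the
   claimed inner product with c = 2 sigma / lambda = 2 sigma sgn(A) / A. *)

Lemma iter_pd_pu (l : list bool) (f : R -> R -> R) :
  iter_pd l (pu f) = iter_pd (l ++ false :: nil) f.
Proof. induction l as [|[] l IH]; simpl; rewrite ?IH; reflexivity. Qed.

Lemma iter_pd_pt (l : list bool) (f : R -> R -> R) :
  iter_pd l (pt f) = iter_pd (l ++ true :: nil) f.
Proof. induction l as [|[] l IH]; simpl; rewrite ?IH; reflexivity. Qed.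

Lemma smooth2_pu (f : R -> R -> R) : smooth2 f -> smooth2 (pu f).
Proof. intros Hf l t u. rewrite iter_pd_pu. apply Hf. Qed.

Lemma smooth2_pt (f : R -> R -> R) : smooth2 f -> smooth2 (pt f).
Proof. intros Hf l t u. rewrite iter_pd_pt. apply Hf. Qed.

Lemma smooth2_is_derive_t (f : R -> R -> R) (t u : R) :
  smooth2 f -> is_derive (fun s => f s u) t (pt f t u).
Proof. intros Hf. apply Derive_correct, (Hf nil t u). Qed.

Lemma smooth2_is_derive_u (f : R -> R -> R) (t u : R) :
  smooth2 f -> is_derive (fun v => f t v) u (pu f t u).
Proof. intros Hf. apply Derive_correct, (Hf nil t u). Qed.

Definition continuous2 (f : R -> R -> R) : Prop :=
  forall t u, continuity_2d_pt f t u.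

Lemma smooth2_continuous2 (f : R -> R -> R) : smooth2 f -> continuous2 f.
Proof. intros Hf t u. apply continuity_2d_pt_filterlim, (Hf nil t u). Qed.

Lemma smooth2_pt_pu (f : R -> R -> R) (t u : R) :
  smooth2 f -> pt (pu f) t u = pu (pt f) t u.
Proof.
  intros Hf. apply Schwarz.
  - exists (mkposreal 1 Rlt_0_1). intros z v _ _. repeat split.
    + apply (Hf nil z v).
    + apply (Hf nil z v).
    + apply (smooth2_pu f Hf nil z v).
    + apply (smooth2_pt f Hf nil z v).
  - apply smooth2_continuous2, smooth2_pt, smooth2_pu, Hf.
  - apply smooth2_continuous2, smooth2_pu, smooth2_pt, Hf.
Qed.

Lemma pu_periodic (f : R -> R -> R) :
  (forall t u, f t (u + 1) = f t u) -> forall t u, pu f t (u + 1) = pu f t u.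
Proof.
  intros Hf t u. unfold pu, Derive. f_equal. apply Lim_ext. intros h.
  replace (u + 1 + h) with (u + h + 1) by ring. rewrite !Hf. reflexivity.
Qed.

Lemma pt_periodic (f : R -> R -> R) :
  (forall t u, f t (u + 1) = f t u) -> forall t u, pt f t (u + 1) = pt f t u.
Proof. intros Hf t u. apply Derive_ext. intros s. apply Hf. Qed.

Lemma continuous2_plus (f g : R -> R -> R) :
  continuous2 f -> continuous2 g -> continuous2 (fun t u => f t u + g t u).
Proof. intros Hf Hg t u. apply continuity_2d_pt_plus; auto. Qed.

Lemma continuous2_minus (f g : R -> R -> R) :
  continuous2 f -> continuous2 g -> continuous2 (fun t u => f t u - g t u).
Proof. intros Hf Hg t u. apply continuity_2d_pt_minus; auto. Qed.

Lemma continuous2_mult (f g : R -> R -> R) :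
  continuous2 f -> continuous2 g -> continuous2 (fun t u => f t u * g t u).
Proof. intros Hf Hg t u. apply continuity_2d_pt_mult; auto. Qed.

Lemma continuous2_const (c : R) : continuous2 (fun _ _ => c).
Proof. intros t u. apply continuity_2d_pt_const. Qed.

Lemma continuous2_div (f g : R -> R -> R) :
  continuous2 f -> continuous2 g -> (forall t u, g t u <> 0) ->
  continuous2 (fun t u => f t u / g t u).
Proof.
  intros Hf Hg Hg0 t u. apply continuity_2d_pt_mult; auto.
  apply continuity_2d_pt_inv; auto.
Qed.

Lemma continuous2_pow (f : R -> R -> R) (n : nat) :
  continuous2 f -> continuous2 (fun t u => f t u ^ n).
Proof.
  intros Hf. induction n as [|n IH]; simpl.
  - apply continuous2_const.
  - apply continuous2_mult; auto.
Qed.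

Lemma continuous2_sqrt (f : R -> R -> R) :
  continuous2 f -> (forall t u, 0 <= f t u) -> continuous2 (fun t u => sqrt (f t u)).
Proof.
  intros Hf Hf0 t u. apply continuity_1d_2d_pt_comp; auto.
  apply continuity_pt_sqrt; auto.
Qed.

Lemma continuous2_continuous_u (f : R -> R -> R) (t u : R) :
  continuous2 f -> continuous (fun v => f t v) u.
Proof.
  intros Hf. apply (continuous_comp_2 (fun _ => t) (fun v => v) f).
  - apply continuous_const.
  - apply continuous_id.
  - apply continuity_2d_pt_filterlim, Hf.
Qed.

Lemma continuous2_ex_RInt (f : R -> R -> R) (t a b : R) :
  continuous2 f -> ex_RInt (fun v => f t v) a b.
Proof.
  intros Hf. apply (ex_RInt_continuous (V := R_CompleteNormedModule)).
  intros v _. apply continuous2_continuous_u, Hf.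
Qed.

Lemma is_derive_RInt01 (F dF : R -> R -> R) (t : R) :
  (forall s u, is_derive (fun z => F z u) s (dF s u)) ->
  continuous2 F -> continuous2 dF ->
  is_derive (fun s => RInt (fun u => F s u) 0 1) t (RInt (fun u => dF t u) 0 1).
Proof.
  intros HdF HF HdF2.
  assert (HD : forall s u, Derive (fun z => F z u) s = dF s u)
    by (intros; apply is_derive_unique, HdF).
  rewrite <- (RInt_ext (fun u => Derive (fun z => F z u) t)) by (intros; apply HD).
  apply is_derive_RInt_param.
  - apply filter_forall. intros s u _. eexists. apply HdF.
  - intros u _. apply continuity_2d_pt_ext with (f := dF).
    + intros; symmetry; apply HD.
    + apply HdF2.
  - apply filter_forall. intros s. apply continuous2_ex_RInt, HF.
Qed.

Lemma RInt_eq_mod_periodic_derive (h f G : R -> R) :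
  (forall u, is_derive G u (h u - f u)) ->
  (forall u, continuous h u) -> (forall u, continuous f u) ->
  (forall u, G (u + 1) = G u) ->
  RInt h 0 1 = RInt f 0 1.
Proof.
  intros HG Hh Hf HGper.
  assert (HG10 : G 1 = G 0) by (rewrite <- (HGper 0), Rplus_0_l; reflexivity).
  assert (Hex : forall g, (forall u, continuous g u) -> ex_RInt g 0 1)
    by (intros g Hg; apply (ex_RInt_continuous (V := R_CompleteNormedModule)); auto).
  assert (Hhf : forall u, continuous (fun v => h v - f v) u)
    by (intros u; apply (continuous_minus (V := R_NormedModule)); auto).
  assert (Hexact : RInt (fun v => h v - f v) 0 1 = 0).
  { rewrite (is_RInt_unique _ 0 1 (minus (G 1) (G 0))).
    - rewrite HG10. unfold minus, plus, opp; simpl. ring.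
    - apply (is_RInt_derive (V := R_CompleteNormedModule)); auto. }
  rewrite (RInt_ext h (fun v => plus (f v) (h v - f v)))
    by (intros; unfold plus; simpl; ring).
  rewrite (RInt_plus (V := R_CompleteNormedModule)) by auto.
  rewrite Hexact. unfold plus; simpl. ring.
Qed.

Lemma is_derive_sqrt_sum_sq (a b : R -> R) (u da db : R) :
  is_derive a u da -> is_derive b u db -> 0 < a u ^ 2 + b u ^ 2 ->
  is_derive (fun v => sqrt (a v ^ 2 + b v ^ 2)) u
    ((a u * da + b u * db) / sqrt (a u ^ 2 + b u ^ 2)).
Proof.
  intros Ha Hb Hpos.
  assert (Hsq : is_derive (fun v => a v ^ 2 + b v ^ 2) u (2 * (a u * da + b u * db))).
  { eapply is_derive_ext; [intros; reflexivity|].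
    replace (2 * (a u * da + b u * db))
      with (plus (INR 2 * da * a u ^ 1) (INR 2 * db * b u ^ 1))
      by (unfold plus; simpl; ring).
    apply (is_derive_plus (fun v => a v ^ 2) (fun v => b v ^ 2));
      apply is_derive_pow; assumption. }
  assert (Hs : 0 < sqrt (a u ^ 2 + b u ^ 2)) by (apply sqrt_lt_R0, Hpos).
  replace ((a u * da + b u * db) / sqrt (a u ^ 2 + b u ^ 2))
    with (2 * (a u * da + b u * db) / (2 * sqrt (a u ^ 2 + b u ^ 2)))
    by (field; lra).
  apply (is_derive_sqrt (fun v => a v ^ 2 + b v ^ 2)); assumption.
Qed.

Lemma is_derive_cross (a b c d : R -> R) (u da db dc dd : R) :
  is_derive a u da -> is_derive b u db -> is_derive c u dc -> is_derive d u dd ->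
  is_derive (fun v => a v * b v - c v * d v) u
    (da * b u + a u * db - (dc * d u + c u * dd)).
Proof.
  intros Ha Hb Hc Hd.
  apply (is_derive_minus (fun v => a v * b v) (fun v => c v * d v));
    apply (is_derive_mult (K := R_AbsRing)); auto; intros; apply Rmult_comm.
Qed.

Lemma is_derive_dot_div_norm (a b p q : R -> R) (u da db dp dq : R) :
  is_derive a u da -> is_derive b u db -> is_derive p u dp -> is_derive q u dq ->
  0 < a u ^ 2 + b u ^ 2 ->
  is_derive (fun v => (a v * p v + b v * q v) / sqrt (a v ^ 2 + b v ^ 2)) u
    ((a u * dp + b u * dq) / sqrt (a u ^ 2 + b u ^ 2)
     - (a u * db - b u * da) / sqrt (a u ^ 2 + b u ^ 2) ^ 3
       * (p u * b u - q u * a u)).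
Proof.
  intros Ha Hb Hp Hq Hpos.
  assert (Hnum : is_derive (fun v => a v * p v + b v * q v) u
                   (da * p u + a u * dp + (db * q u + b u * dq))).
  { apply (is_derive_plus (fun v => a v * p v) (fun v => b v * q v));
      apply (is_derive_mult (K := R_AbsRing)); auto; intros; apply Rmult_comm. }
  assert (Hs : 0 < sqrt (a u ^ 2 + b u ^ 2)) by (apply sqrt_lt_R0, Hpos).
  assert (Hss : sqrt (a u ^ 2 + b u ^ 2) ^ 2 = a u ^ 2 + b u ^ 2)
    by (rewrite <- Rsqr_pow2; apply Rsqr_sqrt; lra).
  eapply is_derive_ext; [intros; reflexivity|].
  match goal with |- is_derive _ _ ?l => replace l with
    (((da * p u + a u * dp + (db * q u + b u * dq)) * sqrt (a u ^ 2 + b u ^ 2)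
      - (a u * p u + b u * q u)
        * ((a u * da + b u * db) / sqrt (a u ^ 2 + b u ^ 2)))
     / sqrt (a u ^ 2 + b u ^ 2) ^ 2) end.
  - apply (is_derive_div (fun v => a v * p v + b v * q v)
      (fun v => sqrt (a v ^ 2 + b v ^ 2)));
      [exact Hnum | apply is_derive_sqrt_sum_sq; auto | lra].
  - set (n := sqrt (a u ^ 2 + b u ^ 2)) in *.
    assert (n <> 0) by lra.
    field_simplify_eq; auto. nsatz.
Qed.

Lemma is_derive_ln_div_sq (L A : R -> R) (t dL dA : R) :
  is_derive L t dL -> is_derive A t dA -> 0 < L t -> A t <> 0 ->
  is_derive (fun s => ln (L s / A s ^ 2)) t (dL / L t - 2 * dA / A t).
Proof.
  intros HL HA HL0 HA0.
  assert (HA2 : 0 < A t ^ 2) by (apply pow2_gt_0; exact HA0).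
  assert (Hq := is_derive_div _ _ t _ _ HL (is_derive_pow _ 2 t _ HA) (pow_nonzero _ 2 HA0)).
  assert (Hc := is_derive_comp ln _ t _ _
                  (is_derive_ln _ (Rdiv_lt_0_compat _ _ HL0 HA2)) Hq).
  eapply is_derive_ext; [intros; reflexivity|].
  match type of Hc with is_derive _ _ ?v => replace (dL / L t - 2 * dA / A t) with v end.
  - exact Hc.
  - unfold scal; simpl; unfold mult; simpl. field. lra.
Qed.

Lemma RInt_minus_scal (f g : R -> R) (k a b : R) :
  ex_RInt f a b -> ex_RInt g a b ->
  RInt (fun u => f u - k * g u) a b = RInt f a b - k * RInt g a b.
Proof.
  intros Hf Hg.
  change (fun u => f u - k * g u) with (fun u => minus (f u) (scal k (g u))).
  rewrite (RInt_minus (V := R_CompleteNormedModule)), (RInt_scal (V := R_CompleteNormedModule)).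
  - reflexivity.
  - exact Hg.
  - exact Hf.
  - apply (ex_RInt_scal (V := R_CompleteNormedModule)), Hg.
Qed.

Definition signed_curv (x y : R -> R -> R) (t u : R) : R :=
  (pu x t u * pu (pu y) t u - pu y t u * pu (pu x) t u) / speed x y t u ^ 3.

Definition normal_vel (x y : R -> R -> R) (t u : R) : R :=
  pt x t u * pu y t u - pt y t u * pu x t u.

Definition speed_dt (x y : R -> R -> R) (t u : R) : R :=
  (pu x t u * pu (pt x) t u + pu y t u * pu (pt y) t u) / speed x y t u.

Definition area_form (x y : R -> R -> R) (t u : R) : R :=
  x t u * pu y t u - y t u * pu x t u.

Definition area_form_dt (x y : R -> R -> R) (t u : R) : R :=
  pt x t u * pu y t u + x t u * pu (pt y) t u
  - (pt y t u * pu x t u + y t u * pu (pt x) t u).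

Lemma Psi_signed_area (x y : R -> R -> R) (t : R) :
  Psi x y t = ln (len_C x y t / signed_area x y t ^ 2).
Proof. unfold Psi, lambda. rewrite pow2_abs. reflexivity. Qed.

Lemma orient_div_lambda (x y : R -> R -> R) (t : R) :
  signed_area x y t <> 0 -> orient x y t / lambda x y t = / signed_area x y t.
Proof.
  intros HA. unfold orient, lambda.
  destruct (Rlt_dec 0 (signed_area x y t)) as [Hp|Hn].
  - rewrite Rabs_right by lra. field. exact HA.
  - rewrite Rabs_left by lra. field. exact HA.
Qed.

Lemma gradient_integrand (x y : R -> R -> R) (t u c : R) :
  speed x y t u <> 0 ->
  (pt x t u * ((curv x y t u - c) * nu1 x y t u)
   + pt y t u * ((curv x y t u - c) * nu2 x y t u)) * speed x y t u
  = signed_curv x y t u * normal_vel x y t u - c * orient x y t * normal_vel x y t u.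
Proof.
  intros Hs. unfold curv, nu1, nu2, signed_curv, normal_vel, orient.
  destruct (Rlt_dec 0 (signed_area x y t)); field; exact Hs.
Qed.

Section FirstVariation.

Variables x y : R -> R -> R.
Hypothesis smooth_x : smooth2 x.
Hypothesis smooth_y : smooth2 y.
Hypothesis periodic_x : forall t u, x t (u + 1) = x t u.
Hypothesis periodic_y : forall t u, y t (u + 1) = y t u.
Hypothesis regular : forall t u, pu x t u <> 0 \/ pu y t u <> 0.

Lemma speed_sq_pos (t u : R) : 0 < pu x t u ^ 2 + pu y t u ^ 2.
Proof.
  assert (Hx := pow2_ge_0 (pu x t u)). assert (Hy := pow2_ge_0 (pu y t u)).
  destruct (regular t u) as [H|H]; apply pow2_gt_0 in H; lra.
Qed.

Lemma speed_pos (t u : R) : 0 < speed x y t u.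
Proof. apply sqrt_lt_R0, speed_sq_pos. Qed.

Lemma speed_neq0 (t u : R) : speed x y t u <> 0.
Proof. apply Rgt_not_eq, speed_pos. Qed.

Ltac solve_smooth2 :=
  lazymatch goal with
  | |- smooth2 (fun t u => pu ?f t u) => apply (smooth2_pu f); solve_smooth2
  | |- smooth2 (fun t u => pt ?f t u) => apply (smooth2_pt f); solve_smooth2
  | |- smooth2 (pu ?f) => apply (smooth2_pu f); solve_smooth2
  | |- smooth2 (pt ?f) => apply (smooth2_pt f); solve_smooth2
  | |- _ => assumption
  end.

Lemma continuous2_speed : continuous2 (speed x y).
Proof.
  apply continuous2_sqrt; [|intros; apply Rlt_le, speed_sq_pos].
  apply continuous2_plus; apply continuous2_pow;
    apply smooth2_continuous2, smooth2_pu; assumption.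
Qed.

Ltac solve_continuous2 :=
  lazymatch goal with
  | |- continuous2 (fun t u => @?f t u + @?g t u) =>
      apply (continuous2_plus f g); solve_continuous2
  | |- continuous2 (fun t u => @?f t u - @?g t u) =>
      apply (continuous2_minus f g); solve_continuous2
  | |- continuous2 (fun t u => @?f t u * @?g t u) =>
      apply (continuous2_mult f g); solve_continuous2
  | |- continuous2 (fun t u => @?f t u / @?g t u) =>
      apply (continuous2_div f g);
        [solve_continuous2 | solve_continuous2
        | intros; first [apply speed_neq0 | apply pow_nonzero, speed_neq0]]
  | |- continuous2 (fun t u => @?f t u ^ ?n) =>
      apply (continuous2_pow f n); solve_continuous2
  | |- continuous2 (fun _ _ => ?c) => apply continuous2_const
  | |- continuous2 (fun t u => speed x y t u) => exact continuous2_speed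
  | |- continuous2 (speed x y) => exact continuous2_speed
  | |- _ => apply smooth2_continuous2; solve_smooth2
  end.

Lemma continuous2_normal_vel : continuous2 (normal_vel x y).
Proof. unfold normal_vel. solve_continuous2. Qed.

Lemma continuous2_curv_normal_vel :
  continuous2 (fun t u => signed_curv x y t u * normal_vel x y t u).
Proof. unfold signed_curv, normal_vel. solve_continuous2. Qed.

Lemma is_derive_speed_t (t u : R) :
  is_derive (fun s => speed x y s u) t (speed_dt x y t u).
Proof.
  unfold speed_dt, speed.
  rewrite <- (smooth2_pt_pu x), <- (smooth2_pt_pu y) by assumption.
  apply (is_derive_sqrt_sum_sq (fun s => pu x s u) (fun s => pu y s u));
    [apply smooth2_is_derive_t, smooth2_pu, smooth_x
    | apply smooth2_is_derive_t, smooth2_pu, smooth_y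
    | apply speed_sq_pos].
Qed.

Lemma RInt_speed_dt (t : R) :
  RInt (fun u => speed_dt x y t u) 0 1
  = RInt (fun u => signed_curv x y t u * normal_vel x y t u) 0 1.
Proof.
  apply (RInt_eq_mod_periodic_derive _ _ (fun u =>
    (pu x t u * pt x t u + pu y t u * pt y t u) / speed x y t u)).
  - intros u. unfold speed_dt, signed_curv, normal_vel, speed.
    apply is_derive_dot_div_norm; try apply smooth2_is_derive_u;
      auto using smooth2_pu, smooth2_pt, speed_sq_pos.
  - intros u. apply (continuous2_continuous_u (speed_dt x y)).
    unfold speed_dt. solve_continuous2.
  - intros u. apply (continuous2_continuous_u _ t u continuous2_curv_normal_vel).
  - intros u. unfold speed.
    rewrite !pu_periodic, !pt_periodic by assumption. reflexivity.
Qed.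

Lemma is_derive_len_C (t : R) :
  is_derive (len_C x y) t
    (RInt (fun u => signed_curv x y t u * normal_vel x y t u) 0 1).
Proof.
  rewrite <- RInt_speed_dt.
  apply (is_derive_RInt01 (speed x y) (speed_dt x y)).
  - intros s u. apply is_derive_speed_t.
  - exact continuous2_speed.
  - unfold speed_dt. solve_continuous2.
Qed.

Lemma is_derive_area_form_t (t u : R) :
  is_derive (fun s => area_form x y s u) t (area_form_dt x y t u).
Proof.
  unfold area_form_dt.
  rewrite <- (smooth2_pt_pu x), <- (smooth2_pt_pu y) by assumption.
  apply (is_derive_cross (fun s => x s u) (fun s => pu y s u)
                         (fun s => y s u) (fun s => pu x s u));
    apply smooth2_is_derive_t; solve_smooth2.
Qed.

Lemma RInt_area_form_dt (t : R) :
  RInt (fun u => area_form_dt x y t u) 0 1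
  = 2 * RInt (normal_vel x y t) 0 1.
Proof.
  rewrite (RInt_eq_mod_periodic_derive _ (fun u => 2 * normal_vel x y t u)
             (fun u => x t u * pt y t u - y t u * pt x t u)).
  - apply (RInt_scal (V := R_CompleteNormedModule)).
    apply continuous2_ex_RInt, continuous2_normal_vel.
  - intros u.
    replace (area_form_dt x y t u - 2 * normal_vel x y t u)
      with (pu x t u * pt y t u + x t u * pu (pt y) t u
            - (pu y t u * pt x t u + y t u * pu (pt x) t u))
      by (unfold area_form_dt, normal_vel; ring).
    apply (is_derive_cross (fun v => x t v) (fun v => pt y t v)
                           (fun v => y t v) (fun v => pt x t v));
      apply smooth2_is_derive_u; solve_smooth2.
  - intros u. apply (continuous2_continuous_u (area_form_dt x y)).
    unfold area_form_dt. solve_continuous2.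
  - intros u. apply (continuous2_continuous_u (fun s v => 2 * normal_vel x y s v)).
    apply continuous2_mult; [apply continuous2_const | apply continuous2_normal_vel].
  - intros u. rewrite periodic_x, periodic_y, !pt_periodic by assumption.
    reflexivity.
Qed.

Lemma is_derive_signed_area (t : R) :
  is_derive (signed_area x y) t (RInt (normal_vel x y t) 0 1).
Proof.
  replace (RInt (normal_vel x y t) 0 1)
    with (/ 2 * RInt (fun u => area_form_dt x y t u) 0 1)
    by (rewrite RInt_area_form_dt; field).
  apply is_derive_scal.
  apply (is_derive_RInt01 (area_form x y) (area_form_dt x y)).
  - intros s u. apply is_derive_area_form_t.
  - unfold area_form. solve_continuous2.
  - unfold area_form_dt. solve_continuous2.
Qed.

Lemma len_C_pos (t : R) : 0 < len_C x y t.
Proof.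
  apply RInt_gt_0; [lra | intros; apply speed_pos |].
  intros u _. apply (continuous2_continuous_u (speed x y)), continuous2_speed.
Qed.

Lemma inner_C_gradient (t : R) :
  signed_area x y t <> 0 ->
  inner_C x y t (pt x t) (pt y t)
    (fun u => (curv x y t u - 2 * len_C x y t / lambda x y t) * nu1 x y t u)
    (fun u => (curv x y t u - 2 * len_C x y t / lambda x y t) * nu2 x y t u)
  = RInt (fun u => signed_curv x y t u * normal_vel x y t u) 0 1 / len_C x y t
    - 2 * RInt (normal_vel x y t) 0 1 / signed_area x y t.
Proof.
  intros HA.
  assert (Hlambda : lambda x y t <> 0) by (apply Rabs_no_R0, HA).
  assert (HL : len_C x y t <> 0) by (apply Rgt_not_eq, len_C_pos).
  unfold inner_C.
  rewrite (RInt_ext _ (fun u => signed_curv x y t u * normal_vel x y t u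
             - 2 * len_C x y t / lambda x y t * orient x y t * normal_vel x y t u))
    by (intros; apply gradient_integrand, speed_neq0).
  rewrite RInt_minus_scal; cycle 1.
  { apply (continuous2_ex_RInt _ t 0 1 continuous2_curv_normal_vel). }
  { apply (continuous2_ex_RInt _ t 0 1 continuous2_normal_vel). }
  replace (2 * len_C x y t / lambda x y t * orient x y t)
    with (2 * len_C x y t * (orient x y t / lambda x y t)) by (field; exact Hlambda).
  rewrite orient_div_lambda by exact HA.
  field. split; assumption.
Qed.

End FirstVariation.

Theorem lemma2p5 (x y : R -> R -> R)
  (Hfam : smooth_simple_closed_family x y)
  (Harea : forall t, 0 < lambda x y t) (t : R) :
  is_derive (fun s => Psi x y s) t
    (inner_C x y t (pt x t) (pt y t)
       (fun u => (curv x y t u - 2 * len_C x y t / lambda x y t) * nu1 x y t u)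
       (fun u => (curv x y t u - 2 * len_C x y t / lambda x y t) * nu2 x y t u)).
Proof.
  destruct Hfam as (sx & sy & Hper & _ & reg).
  assert (perx : forall s u, x s (u + 1) = x s u) by apply Hper.
  assert (pery : forall s u, y s (u + 1) = y s u) by apply Hper.
  assert (HA : signed_area x y t <> 0).
  { intros HA0. specialize (Harea t). unfold lambda in Harea.
    rewrite HA0, Rabs_R0 in Harea. lra. }
  apply (is_derive_ext (fun s => ln (len_C x y s / signed_area x y s ^ 2)));
    [intros s; symmetry; apply Psi_signed_area |].
  rewrite inner_C_gradient by assumption.
  apply is_derive_ln_div_sq;
    auto using is_derive_len_C, is_derive_signed_area, len_C_pos.
Qed.
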